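(* The libraries $AbsQ$ and $AbsQ_0$ (defined in the context) have exactly the same set of histories: $AbsQ$ refines $AbsQ_0$ and $AbsQ_0$ refines $AbsQ$, i.e. $H(AbsQ)=H(AbsQ_0)$.
   Context: Fix a set $\mathit{Vals}$ of values containing a special value $\mathtt{EMPTY}$, take operation identifiers $\mathit{Ops}=\mathbb{N}$, and methods $\mathit{Methods}=\{enq,deq\}$. Call actions are $inv(m,d,k)$ and return actions $ret(m,d,k)$ ($m$ a method, $d$ a value, $k$ an operation identifier); $C$ and $R$ denote the sets of all call, resp. return, actions (the value field is omitted when irrelevant, e.g. $inv(deq,k)$, $ret(enq,k)$). A labeled transition system (LTS) $(Q,\Sigma,s_0,\delta)$ has states $Q$, alphabet $\Sigma$, initial state $s_0$ and transition relation $\delta\subseteq Q\times\Sigma\times Q$; a trace is the sequence of labels of a finite execution from $s_0$. The history set $H(L)$ of an LTS $L$ with $C\cup R\subseteq\Sigma$ is the set of projections of its traces onto $C\cup R$. $L_1$ refines $L_2$ iff $H(L_1)\subseteq H(L_2)$. For a partial function $f$, $f[x\mapsto y]$ is $f$ updated at $x$. $AbsQ_0$ (standard atomic queue): states are tuples $(\sigma,in,rv,cp)$ with $\sigma\in\mathit{Vals}^*$ and partial functions $in,rv:\mathit{Ops}\rightharpoonup\mathit{Vals}$, $cp:\mathit{Ops}\rightharpoonup\{A_1,A,A_2,R_1,R_2,R_3\}$; initially $\sigma=\epsilon$ and all functions empty. Transitions: $inv(enq,d,k)$ if $k\notin dom(cp)$, $d\ne\mathtt{EMPTY}$: set $in(k)=d$,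 $cp(k)=A_1$. $lin(enq,d,k)$ if $cp(k)=A_1$, $in(k)=d$: $\sigma:=d\cdot\sigma$, $cp(k)=A$. $ret(enq,k)$ if $cp(k)=A$: $cp(k)=A_2$. $inv(deq,k)$ if $k\notin dom(cp)$: $cp(k)=R_1$. $lin(deq,d,k)$ if $cp(k)=R_1$ and $\sigma=\sigma'\cdot d$: $\sigma:=\sigma'$, $rv(k)=d$, $cp(k)=R_2$. $lin(deq,\mathtt{EMPTY},k)$ if $cp(k)=R_1$ and $\sigma=\epsilon$: $rv(k)=\mathtt{EMPTY}$, $cp(k)=R_2$. $ret(deq,d,k)$ if $cp(k)=R_2$ and $rv(k)=d$: $cp(k)=R_3$. $AbsQ$: alphabet $C\cup R\cup Lin(deq)$ where $Lin(deq)=\{lin(deq,d,k)\}$. States are tuples $(O,<,\ell,rv,cp)$ with $O\subseteq\mathit{Ops}$, $<$ a strict partial order on $O$, $\ell:O\to\mathit{Vals}\times\{\mathtt{PEND},\mathtt{COMP}\}$ (write $\ell_1,\ell_2$ for its components), $rv:\mathit{Ops}\rightharpoonup\mathit{Vals}$, $cp:\mathit{Ops}\rightharpoonup\{A_1,A_2,R_1,R_2,R_3\}$; all components empty initially. Let $\mathtt{COMP}(O)=\{k\in O:\ell_2(k)=\mathtt{COMP}\}$, $min(O)$ the $<$-minimal elements of $O$, and $<\uparrow k'$ the relation $<$ with all pairs containing $k'$ removed. Transitions: $inv(enq,d,k)$ if $k\notin dom(cp)$, $d\ne\mathtt{EMPTY}$: $O:=O\cup\{k\}$, $<:=<\cup(\mathtt{COMP}(O)\times\{k\})$,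 $\ell(k)=(d,\mathtt{PEND})$, $cp(k)=A_1$. $inv(deq,k)$ if $k\notin dom(cp)$: $cp(k)=R_1$. $ret(deq,d,k)$ if $cp(k)=R_2$, $rv(k)=d$: $cp(k)=R_3$. $ret(enq,k)$ if $cp(k)=A_1$, $k\in O$, $\ell(k)=(d,\mathtt{PEND})$: $\ell(k)=(d,\mathtt{COMP})$, $cp(k)=A_2$. $ret(enq,k)$ if $cp(k)=A_1$, $k\notin O$: $cp(k)=A_2$. $lin(deq,d,k)$ if $cp(k)=R_1$, $d\ne\mathtt{EMPTY}$, and some $k'\in min(O)$ has $\ell_1(k')=d$: $O:=O\setminus\{k'\}$, $<:=<\uparrow k'$, $rv(k)=d$, $cp(k)=R_2$. $lin(deq,\mathtt{EMPTY},k)$ if $cp(k)=R_1$ and $\ell_2(o)=\mathtt{PEND}$ for all $o\in O$: $rv(k)=\mathtt{EMPTY}$, $cp(k)=R_2$. *)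

From Stdlib Require Import List Arith.
Import ListNotations.
Set Implicit Arguments.

(* Call actions:   InvEnq d k = inv(enq,d,k),  InvDeq k = inv(deq,k)
   Return actions: RetEnq k = ret(enq,k),      RetDeq d k = ret(deq,d,k)
   Linearization:  LinEnq d k = lin(enq,d,k),  LinDeq d k = lin(deq,d,k) *)
Inductive action (V : Type) : Type :=
| InvEnq (d : V) (k : nat)
| InvDeq (k : nat)
| RetEnq (k : nat)
| RetDeq (d : V) (k : nat)
| LinEnq (d : V) (k : nat)
| LinDeq (d : V) (k : nat).

Arguments InvDeq {V} k.
Arguments RetEnq {V} k.

Definition is_call_or_ret (V : Type) (a : action V) : bool :=
  match a with
  | InvEnq _ _ | InvDeq _ | RetEnq _ | RetDeq _ _ => true
  | _ => false
  end.

Record LTS (V : Type) := mkLTS {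
  lstate : Type;
  linit : lstate;
  lstep : lstate -> action V -> lstate -> Prop }.

Inductive exec (V : Type) (L : LTS V) : lstate L -> list (action V) -> lstate L -> Prop :=
| exec_nil : forall s, exec L s [] s
| exec_cons : forall s a s' tr s'',
    lstep L s a s' -> exec L s' tr s'' -> exec L s (a :: tr) s''.

Definition is_trace (V : Type) (L : LTS V) (tr : list (action V)) : Prop :=
  exists s, exec L (linit L) tr s.

Definition histories (V : Type) (L : LTS V) (h : list (action V)) : Prop :=
  exists tr, is_trace L tr /\ h = filter (@is_call_or_ret V) tr.

Definition refines (V : Type) (L1 L2 : LTS V) : Prop :=
  forall h, histories L1 h -> histories L2 h.

Definition upd (X : Type) (f : nat -> option X) (x : nat) (y : X) : nat -> option X :=
  fun z => if Nat.eqb z x then Some y else f z.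

Inductive cp0 := A1_0 | A_0 | A2_0 | R1_0 | R2_0 | R3_0.

Record st0 (V : Type) := mkSt0 {
  sigma0 : list V;            (* d . sigma is  d :: sigma *)
  in0 : nat -> option V;
  rv0 : nat -> option V;
  cpf0 : nat -> option cp0 }.

Inductive step0 (V : Type) (EMPTY : V) : st0 V -> action V -> st0 V -> Prop :=
| s0_inv_enq : forall sg i r c d k,
    c k = None -> d <> EMPTY ->
    step0 EMPTY (mkSt0 sg i r c) (InvEnq d k) (mkSt0 sg (upd i k d) r (upd c k A1_0))
| s0_lin_enq : forall sg i r c d k,
    c k = Some A1_0 -> i k = Some d ->
    step0 EMPTY (mkSt0 sg i r c) (LinEnq d k) (mkSt0 (d :: sg) i r (upd c k A_0))
| s0_ret_enq : forall sg i r c k,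
    c k = Some A_0 ->
    step0 EMPTY (mkSt0 sg i r c) (RetEnq k) (mkSt0 sg i r (upd c k A2_0))
| s0_inv_deq : forall sg i r c k,
    c k = None ->
    step0 EMPTY (mkSt0 sg i r c) (InvDeq k) (mkSt0 sg i r (upd c k R1_0))
| s0_lin_deq : forall sg' i r c d k,
    c k = Some R1_0 ->
    step0 EMPTY (mkSt0 (sg' ++ [d]) i r c) (LinDeq d k) (mkSt0 sg' i (upd r k d) (upd c k R2_0))
| s0_lin_deq_empty : forall i r c k,
    c k = Some R1_0 ->
    step0 EMPTY (mkSt0 [] i r c) (LinDeq EMPTY k) (mkSt0 [] i (upd r k EMPTY) (upd c k R2_0))
| s0_ret_deq : forall sg i r c d k,
    c k = Some R2_0 -> r k = Some d ->
    step0 EMPTY (mkSt0 sg i r c) (RetDeq d k) (mkSt0 sg i r (upd c k R3_0)).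

Definition AbsQ0 (V : Type) (EMPTY : V) : LTS V :=
  @mkLTS V (st0 V) (mkSt0 [] (fun _ => None) (fun _ => None) (fun _ => None)) (@step0 V EMPTY).

Inductive status := PEND | COMP.
Inductive cp1 := A1 | A2 | R1 | R2 | R3.

Record st1 (V : Type) := mkSt1 {
  O1 : nat -> Prop;
  lt1 : nat -> nat -> Prop;
  ell1 : nat -> option (V * status);
  rv1 : nat -> option V;
  cpf1 : nat -> option cp1 }.

Definition compO (V : Type) (O : nat -> Prop) (l : nat -> option (V * status)) (o : nat) : Prop :=
  O o /\ exists d, l o = Some (d, COMP).

Definition minO (O : nat -> Prop) (lt : nat -> nat -> Prop) (k : nat) : Prop :=
  O k /\ ~ exists o, O o /\ lt o k.

Inductive step1 (V : Type) (EMPTY : V) : st1 V -> action V -> st1 V -> Prop :=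
| s1_inv_enq : forall O lt l r c d k,
    c k = None -> d <> EMPTY ->
    step1 EMPTY (mkSt1 O lt l r c) (InvEnq d k)
      (mkSt1 (fun o => O o \/ o = k)
             (fun a b => lt a b \/ (compO O l a /\ b = k))
             (upd l k (d, PEND)) r (upd c k A1))
| s1_inv_deq : forall O lt l r c k,
    c k = None ->
    step1 EMPTY (mkSt1 O lt l r c) (InvDeq k) (mkSt1 O lt l r (upd c k R1))
| s1_ret_deq : forall O lt l r c d k,
    c k = Some R2 -> r k = Some d ->
    step1 EMPTY (mkSt1 O lt l r c) (RetDeq d k) (mkSt1 O lt l r (upd c k R3))
| s1_ret_enq_in : forall O lt l r c d k,
    c k = Some A1 -> O k -> l k = Some (d, PEND) ->
    step1 EMPTY (mkSt1 O lt l r c) (RetEnq k) (mkSt1 O lt (upd l k (d, COMP)) r (upd c k A2))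
| s1_ret_enq_out : forall O lt l r c k,
    c k = Some A1 -> ~ O k ->
    step1 EMPTY (mkSt1 O lt l r c) (RetEnq k) (mkSt1 O lt l r (upd c k A2))
| s1_lin_deq : forall O lt l r c d k k' st,
    c k = Some R1 -> d <> EMPTY -> minO O lt k' -> l k' = Some (d, st) ->
    step1 EMPTY (mkSt1 O lt l r c) (LinDeq d k)
      (mkSt1 (fun o => O o /\ o <> k')
             (fun a b => lt a b /\ a <> k' /\ b <> k')
             l (upd r k d) (upd c k R2))
| s1_lin_deq_empty : forall O lt l r c k,
    c k = Some R1 ->
    (forall o, O o -> exists d, l o = Some (d, PEND)) ->
    step1 EMPTY (mkSt1 O lt l r c) (LinDeq EMPTY k) (mkSt1 O lt l (upd r k EMPTY) (upd c k R2)).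

Definition AbsQ (V : Type) (EMPTY : V) : LTS V :=
  @mkLTS V (st1 V)
    (mkSt1 (fun _ => False) (fun _ _ => False) (fun _ => None) (fun _ => None) (fun _ => None))
    (@step1 V EMPTY).

From Stdlib Require Import List Arith Classical FunctionalExtensionality ClassicalEpsilon.
Import ListNotations.
Set Implicit Arguments.
Unset Strict Implicit.

(* Both inclusions are proved by simulation.

   [AbsQ] simulates [AbsQ_0] forward, with no step for a linearization of an enqueue: its
   set [O] holds the enqueues of the queue of [AbsQ_0] together with the invoked ones not
   yet linearized, and [a < b] forces [a] to be queued, behind [b] if [b] is queued, so a
   dequeue of [AbsQ_0] always removes a [<]-minimal element of [O].

   [AbsQ_0] simulates [AbsQ] backward.  A pending enqueue of [AbsQ] may or may not be
   linearized yet in [AbsQ_0]; read backward, this choice is settled lazily.  Where the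
   target state of a step queues such pending enqueues in front of what the step needs,
   namely after the enqueue just invoked or after a dequeue returning [EMPTY], their
   linearizations are replayed right after the step.  Totality of the relation comes
   from an invariant of [AbsQ]: the completed enqueues of [O] can be listed along [<]. *)

Notation visible := (filter (@is_call_or_ret _)).

(** * Refinement by simulation *)

Section Simulations.

Variable V : Type.

Lemma exec_app (L : LTS V) s t1 s' t2 s'' :
  exec L s t1 s' -> exec L s' t2 s'' -> exec L s (t1 ++ t2) s''.
Proof. induction 1; simpl; intros; [assumption | econstructor; eauto]. Qed.

Lemma exec_one (L : LTS V) s a s' : lstep L s a s' -> exec L s [a] s'.
Proof. intros; econstructor; eauto; constructor. Qed.

Lemma exec_snoc_inv (L : LTS V) s t a s'' :
  exec L s (t ++ [a]) s'' -> exists s', exec L s t s' /\ lstep L s' a s''.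
Proof.
  revert s; induction t as [|b t IH]; simpl; intros s H; inversion H; subst.
  - inversion H5; subst. exists s; split; [constructor | assumption].
  - destruct (IH _ H5) as (x & Hx & Hstep). exists x; split; [econstructor; eauto | assumption].
Qed.

Lemma exec_preserves (L : LTS V) (Inv : lstate L -> Prop) :
  (forall s a s', Inv s -> lstep L s a s' -> Inv s') ->
  forall s t s', exec L s t s' -> Inv s -> Inv s'.
Proof. intros Hinv s t s' H; induction H; eauto. Qed.

Theorem forward_simulation_refines (L1 L2 : LTS V) (R : lstate L1 -> lstate L2 -> Prop) :
  R (linit L1) (linit L2) ->
  (forall s1 a s1' s2, lstep L1 s1 a s1' -> R s1 s2 ->
     exists tr s2', exec L2 s2 tr s2' /\ visible tr = visible [a] /\ R s1' s2') ->
  refines L1 L2.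
Proof.
  intros Hinit Hstep h [tr [[s Hexec] ->]].
  assert (Hsim : forall s1 t s1', exec L1 s1 t s1' -> forall s2, R s1 s2 ->
            exists tr2 s2', exec L2 s2 tr2 s2' /\ visible tr2 = visible t).
  { induction 1 as [s1 | s1 a s1' t s1'' Hst _ IH]; intros s2 HR.
    - exists [], s2; split; [constructor | reflexivity].
    - destruct (Hstep _ _ _ _ Hst HR) as (t1 & s2' & E1 & V1 & HR').
      destruct (IH _ HR') as (t2 & s2'' & E2 & V2).
      exists (t1 ++ t2), s2''; split; [eapply exec_app; eauto |].
      rewrite filter_app, V1, V2, <- filter_app. reflexivity. }
  destruct (Hsim _ _ _ Hexec _ Hinit) as (tr2 & s2 & E & Vis).
  exists tr2; split; [exists s2; exact E | symmetry; exact Vis].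
Qed.

Theorem backward_simulation_refines (L1 L2 : LTS V) (Inv : lstate L1 -> Prop)
    (R : lstate L1 -> lstate L2 -> Prop) :
  Inv (linit L1) ->
  (forall s a s', Inv s -> lstep L1 s a s' -> Inv s') ->
  (forall s, Inv s -> exists s2, R s s2) ->
  (forall s2, R (linit L1) s2 -> s2 = linit L2) ->
  (forall s1 a s1' s2', Inv s1 -> lstep L1 s1 a s1' -> R s1' s2' ->
     exists s2 tr, R s1 s2 /\ exec L2 s2 tr s2' /\ visible tr = visible [a]) ->
  refines L1 L2.
Proof.
  intros Hinv0 Hinv Htotal Hinit Hstep h [tr [[s Hexec] ->]].
  assert (Hreach : forall t s, exec L1 (linit L1) t s -> Inv s)
    by (intros; eapply exec_preserves; eauto).
  assert (Hsim : forall t s1, exec L1 (linit L1) t s1 -> forall s2, R s1 s2 ->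
            exists tr2, exec L2 (linit L2) tr2 s2 /\ visible tr2 = visible t).
  { intro t; induction t as [|a t IH] using rev_ind; intros s1 Hx s2 HR.
    - inversion Hx; subst. rewrite (Hinit _ HR). exists []; split; [constructor | reflexivity].
    - destruct (exec_snoc_inv Hx) as (s1p & Hxp & Hst).
      destruct (Hstep _ _ _ _ (Hreach _ _ Hxp) Hst HR) as (s2p & u & HRp & Eu & Vu).
      destruct (IH _ Hxp _ HRp) as (tr2 & E2 & V2).
      exists (tr2 ++ u); split; [eapply exec_app; eauto |].
      rewrite !filter_app, V2, Vu. reflexivity. }
  destruct (Htotal _ (Hreach _ _ Hexec)) as [s2 HR].
  destruct (Hsim _ _ Hexec _ HR) as (tr2 & E & Vis).
  exists tr2; split; [exists s2; exact E | symmetry; exact Vis].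
Qed.

End Simulations.

Section Lists.

Variable A : Type.

(* Read on a queue listed newest first: every element is preceded (w.r.t. [lt]) only by
   elements that are further back in the queue. *)
Fixpoint preds_after (lt : A -> A -> Prop) (l : list A) : Prop :=
  match l with
  | [] => True
  | b :: rest => (forall a, lt a b -> In a rest) /\ preds_after lt rest
  end.

Lemma preds_after_mono (lt lt' : A -> A -> Prop) l :
  preds_after lt l -> (forall a b, In b l -> lt' a b -> lt a b) -> preds_after lt' l.
Proof.
  induction l as [|b l IH]; simpl; [auto |]. intros [Hb Hl] H; split.
  - intros a Hab. apply Hb, (H a b); auto.
  - apply IH; auto.
Qed.

Lemma preds_after_app_r lt (l1 l2 : list A) : preds_after lt (l1 ++ l2) -> preds_after lt l2.
Proof. induction l1; simpl; tauto. Qed.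

Lemma preds_after_in lt l1 (b : A) l2 a : preds_after lt (l1 ++ b :: l2) -> lt a b -> In a l2.
Proof. intros H Hab. apply preds_after_app_r in H. apply H, Hab. Qed.

Lemma preds_after_filter (lt lt' : A -> A -> Prop) f l :
  preds_after lt l -> (forall a b, lt' a b -> lt a b /\ f a = true) -> preds_after lt' (filter f l).
Proof.
  induction l as [|b l IH]; simpl; [auto |]. intros [Hb Hl] H.
  destruct (f b); simpl; auto. split; auto.
  intros a Hab. destruct (H _ _ Hab). apply filter_In; auto.
Qed.

Lemma preds_after_snoc (lt lt' : A -> A -> Prop) l x :
  preds_after lt' l -> (forall a b, In b l -> lt a b -> a = x \/ lt' a b) ->
  (forall a, ~ lt a x) -> preds_after lt (l ++ [x]).
Proof.
  induction l as [|b l IH]; simpl; intros Hl H Hx.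
  - split; [intros a Hax; destruct (Hx a Hax) | exact I].
  - destruct Hl as [Hb Hl]. split.
    + intros a Hab. apply in_or_app. destruct (H a b (or_introl eq_refl) Hab) as [->|E].
      * right; left; reflexivity.
      * left; auto.
    + apply IH; auto.
Qed.

Lemma NoDup_app_disjoint (l1 l2 : list A) x : NoDup (l1 ++ l2) -> In x l1 -> In x l2 -> False.
Proof.
  induction l1 as [|a l1 IH]; simpl; intros H H1 H2; [exact H1 |].
  inversion H as [| ? ? Ha Hnd]; subst. destruct H1 as [->|H1]; [| eauto].
  apply Ha, in_or_app; auto.
Qed.

End Lists.

Section Updates.

Variable X : Type.

Lemma upd_eq (f : nat -> option X) k y : upd f k y k = Some y.
Proof. unfold upd; rewrite Nat.eqb_refl; reflexivity. Qed.

Lemma upd_neq (f : nat -> option X) k y z : z <> k -> upd f k y z = f z.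
Proof. unfold upd; intros; destruct (Nat.eqb_spec z k); congruence. Qed.

Lemma upd_upd (f : nat -> option X) k x y : upd (upd f k x) k y = upd f k y.
Proof. extensionality z; unfold upd; destruct (z =? k); reflexivity. Qed.

Lemma upd_id (f : nat -> option X) k y : f k = Some y -> upd f k y = f.
Proof. intro H; extensionality z; unfold upd; destruct (Nat.eqb_spec z k); congruence. Qed.

(* [upd f k y] is [put f k (Some y)] by conversion; [put f k None] removes [k] from the domain. *)
Definition put (f : nat -> option X) k (o : option X) : nat -> option X :=
  fun z => if z =? k then o else f z.

Lemma put_eq (f : nat -> option X) k o : put f k o k = o.
Proof. unfold put; rewrite Nat.eqb_refl; reflexivity. Qed.

Lemma put_neq (f : nat -> option X) k o z : z <> k -> put f k o z = f z.
Proof. unfold put; intros; destruct (Nat.eqb_spec z k); congruence. Qed.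

Lemma upd_put (f : nat -> option X) k o y : upd (put f k o) k y = upd f k y.
Proof. extensionality z; unfold upd, put; destruct (z =? k); reflexivity. Qed.

Definition mark (f : nat -> option X) (l : list nat) (y : X) : nat -> option X :=
  fun z => if in_dec Nat.eq_dec z l then Some y else f z.

Lemma mark_mark (f : nat -> option X) l x y : mark (mark f l x) l y = mark f l y.
Proof. extensionality z; unfold mark; destruct (in_dec Nat.eq_dec z l); reflexivity. Qed.

Lemma mark_id (f : nat -> option X) l y : (forall z, In z l -> f z = Some y) -> mark f l y = f.
Proof. intro H; extensionality z; unfold mark; destruct (in_dec Nat.eq_dec z l); auto. symmetry; auto. Qed.

Lemma mark_cons (f : nat -> option X) k l y : mark f (k :: l) y = upd (mark f l y) k y.
Proof.
  extensionality z; unfold mark, upd.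
  destruct (in_dec Nat.eq_dec z (k :: l)) as [H|H]; destruct (in_dec Nat.eq_dec z l);
    destruct (Nat.eqb_spec z k); simpl in H; intuition congruence.
Qed.

Lemma upd_mark (f : nat -> option X) l y k x :
  ~ In k l -> upd (mark f l y) k x = mark (upd f k x) l y.
Proof.
  intro Hk; extensionality z; unfold mark, upd.
  destruct (in_dec Nat.eq_dec z l); destruct (Nat.eqb_spec z k); subst; tauto.
Qed.

End Updates.

(** * [AbsQ_0] refines [AbsQ] *)

Section Forward.

Variables (V : Type) (EMPTY : V).

Definition queue_ids (i : nat -> option V) (q : list nat) (sg : list V) : Prop :=
  Forall2 (fun k d => i k = Some d) q sg.

Lemma queue_ids_agree i i' q sg :
  (forall z, In z q -> i' z = i z) -> queue_ids i q sg -> queue_ids i' q sg.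
Proof. intros Hi H; induction H; constructor; simpl in *; [rewrite Hi | apply IHForall2]; auto. Qed.

Definition cp_abs (x : cp0) : cp1 :=
  match x with A1_0 | A_0 => A1 | A2_0 => A2 | R1_0 => R1 | R2_0 => R2 | R3_0 => R3 end.

Definition enq_active (c : option cp0) : Prop :=
  c = Some A1_0 \/ c = Some A_0 \/ c = Some A2_0.

(* [q] lists the identifiers in the queue [sigma0], newest first. *)
Record fwd_rel (s0 : st0 V) (s1 : st1 V) (q : list nat) : Prop := {
  fwd_queue : queue_ids (in0 s0) q (sigma0 s0);
  fwd_nodup : NoDup q;
  fwd_rv : forall k, rv1 s1 k = rv0 s0 k;
  fwd_cp : forall k, cpf1 s1 k = option_map cp_abs (cpf0 s0 k);
  fwd_O : forall k, O1 s1 k <-> In k q \/ cpf0 s0 k = Some A1_0;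
  fwd_queued : forall k, In k q -> cpf0 s0 k = Some A_0 \/ cpf0 s0 k = Some A2_0;
  fwd_label : forall k, enq_active (cpf0 s0 k) ->
    exists d st, in0 s0 k = Some d /\ ell1 s1 k = Some (d, st) /\ d <> EMPTY /\
      (O1 s1 k -> (st = COMP <-> cpf0 s0 k = Some A2_0));
  fwd_lt_queued : forall a b, lt1 s1 a b -> In a q;
  fwd_lt_sorted : preds_after (lt1 s1) q }.

Lemma fwd_init : fwd_rel (linit (AbsQ0 EMPTY)) (linit (AbsQ EMPTY)) [].
Proof.
  split; simpl; try constructor; try tauto.
  - intros [[] | H]; discriminate.
  - intros k [H|[H|H]]; discriminate.
Qed.

Lemma fwd_not_queued s0 s1 q k :
  fwd_rel s0 s1 q -> cpf0 s0 k <> Some A_0 -> cpf0 s0 k <> Some A2_0 -> ~ In k q.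
Proof. intros HF H1 H2 Hk. destruct (fwd_queued HF Hk); contradiction. Qed.

Lemma upd_cp_abs (c1 : nat -> option cp1) c k x :
  (forall z, c1 z = option_map cp_abs (c z)) ->
  forall z, upd c1 k (cp_abs x) z = option_map cp_abs (upd c k x z).
Proof. intros H z; unfold upd; destruct (z =? k); auto. Qed.

Lemma fwd_rel_upd_deq_cp sg i r r' c O lt l r1 r1' c1 q k x :
  fwd_rel (mkSt0 sg i r c) (mkSt1 O lt l r1 c1) q ->
  ~ enq_active (c k) -> ~ enq_active (Some x) -> (forall z, r1' z = r' z) ->
  fwd_rel (mkSt0 sg i r' (upd c k x)) (mkSt1 O lt l r1' (upd c1 k (cp_abs x))) q.
Proof.
  intros HF Hk Hx Hr.
  assert (Hq : ~ In k q) by (apply (fwd_not_queued HF); simpl; intro E; apply Hk; red; auto).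
  destruct HF as [Hsg Hnd _ Hcp HO Hqd Hlab Hltq Hlts]; simpl in *.
  split; simpl; auto.
  - apply upd_cp_abs, Hcp.
  - intro z; rewrite HO. destruct (Nat.eq_dec z k) as [->|Hz].
    + rewrite upd_eq. split; intros [H|H]; auto; exfalso; [apply Hk | apply Hx]; red; auto.
    + rewrite upd_neq by exact Hz. reflexivity.
  - intros z Hz. rewrite upd_neq by congruence. auto.
  - intros z Hz. destruct (Nat.eq_dec z k) as [->|Hzk].
    + rewrite upd_eq in Hz. contradiction.
    + rewrite upd_neq in * by exact Hzk. auto.
Qed.

Lemma fwd_inv_enq sg i r c s1 q d k :
  fwd_rel (mkSt0 sg i r c) s1 q -> c k = None -> d <> EMPTY ->
  exists s1', step1 EMPTY s1 (InvEnq d k) s1' /\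
    fwd_rel (mkSt0 sg (upd i k d) r (upd c k A1_0)) s1' q.
Proof.
  intros HF Hck Hd. destruct s1 as [O lt l r1 c1].
  assert (Hk : ~ In k q) by (apply (fwd_not_queued HF); simpl; congruence).
  destruct HF as [Hsg Hnd Hr Hcp HO Hqd Hlab Hltq Hlts]; simpl in *.
  eexists; split; [constructor; [rewrite Hcp, Hck; reflexivity | exact Hd] |].
  split; simpl; auto.
  - apply queue_ids_agree with i; [| exact Hsg]. intros z Hz; apply upd_neq; congruence.
  - apply upd_cp_abs with (x := A1_0), Hcp.
  - intro z; rewrite HO. destruct (Nat.eq_dec z k) as [->|Hz].
    + rewrite upd_eq. tauto.
    + rewrite upd_neq by exact Hz. intuition.
  - intros z Hz. rewrite upd_neq by congruence. auto.
  - intros z Hz. destruct (Nat.eq_dec z k) as [->|Hzk].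
    + exists d, PEND. rewrite !upd_eq. repeat split; auto; intros; congruence.
    + rewrite !upd_neq in * by exact Hzk. destruct (Hlab z Hz) as (d' & st & E1 & E2 & E3 & E4).
      exists d', st; repeat split; auto; intros; apply E4; intuition congruence.
  - intros a b [Hab | [[Ha [d' Hd']] ->]]; [eauto |].
    apply HO in Ha; destruct Ha as [Ha | Ha]; [exact Ha |].
    destruct (Hlab a (or_introl Ha)) as (d'' & st & _ & E2 & _ & E4).
    rewrite Hd' in E2; injection E2 as <- <-.
    assert (Ha2 : c a = Some A2_0) by (apply E4; [apply HO; auto | reflexivity]). congruence.
  - apply preds_after_mono with lt; [exact Hlts |].
    intros a b Hb [Hab | [_ ->]]; [exact Hab | contradiction].
Qed.

Lemma fwd_lin_enq sg i r c s1 q d k :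
  fwd_rel (mkSt0 sg i r c) s1 q -> c k = Some A1_0 -> i k = Some d ->
  fwd_rel (mkSt0 (d :: sg) i r (upd c k A_0)) s1 (k :: q).
Proof.
  intros HF Hck Hik.
  assert (Hk : ~ In k q) by (apply (fwd_not_queued HF); simpl; congruence).
  destruct HF as [Hsg Hnd Hr Hcp HO Hqd Hlab Hltq Hlts]; simpl in *.
  split; simpl; auto.
  - constructor; assumption.
  - constructor; assumption.
  - intro z. destruct (Nat.eq_dec z k) as [->|Hz].
    + rewrite upd_eq, Hcp, Hck. reflexivity.
    + rewrite upd_neq by exact Hz. apply Hcp.
  - intro z; rewrite HO. destruct (Nat.eq_dec z k) as [->|Hz].
    + rewrite upd_eq. tauto.
    + rewrite upd_neq by exact Hz. intuition congruence.
  - intros z [->|Hz]; [rewrite upd_eq; auto |]. rewrite upd_neq by congruence. auto.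
  - intros z Hz. destruct (Nat.eq_dec z k) as [->|Hzk].
    + destruct (Hlab k (or_introl Hck)) as (d' & st & E1 & E2 & E3 & E4).
      exists d', st. rewrite upd_eq. repeat split; auto; intros; [| congruence].
      rewrite E4 in *; auto; congruence.
    + rewrite upd_neq in * by exact Hzk. auto.
  - intros a b Hab. right. eauto.
  - split; [eauto | exact Hlts].
Qed.

Lemma fwd_ret_enq sg i r c s1 q k :
  fwd_rel (mkSt0 sg i r c) s1 q -> c k = Some A_0 ->
  exists s1', step1 EMPTY s1 (RetEnq k) s1' /\ fwd_rel (mkSt0 sg i r (upd c k A2_0)) s1' q.
Proof.
  intros HF Hck. destruct s1 as [O lt l r1 c1].
  destruct (fwd_label (k := k) HF) as (d & st & Hik & Hlk & Hd & Hst); [simpl; red; auto |].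
  destruct HF as [Hsg Hnd Hr Hcp HO Hqd Hlab Hltq Hlts]; simpl in *.
  assert (Hc1k : c1 k = Some A1) by (rewrite Hcp, Hck; reflexivity).
  (* Both ways of returning (with [k] in [O] or already dequeued) lead to related states. *)
  assert (Hrel : forall l', (forall z, z <> k -> l' z = l z) ->
            (exists st', l' k = Some (d, st') /\ (O k -> st' = COMP)) ->
            fwd_rel (mkSt0 sg i r (upd c k A2_0)) (mkSt1 O lt l' r1 (upd c1 k A2)) q).
  { intros l' Hl' (st' & Hl'k & Hst'). split; simpl; auto.
    - apply upd_cp_abs with (x := A2_0), Hcp.
    - intro z; rewrite HO. destruct (Nat.eq_dec z k) as [->|Hz].
      + rewrite upd_eq, Hck. intuition congruence.
      + rewrite upd_neq by exact Hz. tauto.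
    - intros z Hz. destruct (Nat.eq_dec z k) as [->|Hzk]; [rewrite upd_eq; auto |].
      rewrite upd_neq by exact Hzk. auto.
    - intros z Hz. destruct (Nat.eq_dec z k) as [->|Hzk].
      + exists d, st'. rewrite upd_eq. repeat split; auto.
      + rewrite Hl', !upd_neq in * by exact Hzk. auto. }
  destruct (classic (O k)) as [HOk | HOk].
  - assert (st = PEND) as ->.
    { destruct st; [reflexivity |]. destruct (Hst HOk) as [E _]. rewrite E in Hck by reflexivity.
      discriminate. }
    eexists; split; [eapply s1_ret_enq_in; eauto |].
    apply Hrel; [intros; apply upd_neq; assumption | exists COMP; rewrite upd_eq; auto].
  - eexists; split; [eapply s1_ret_enq_out; eauto |].
    apply Hrel; [reflexivity | exists st; split; [exact Hlk | contradiction]].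
Qed.

Lemma fwd_lin_deq sg i r c s1 q d k :
  fwd_rel (mkSt0 (sg ++ [d]) i r c) s1 q -> c k = Some R1_0 ->
  exists s1' q', step1 EMPTY s1 (LinDeq d k) s1' /\
    fwd_rel (mkSt0 sg i (upd r k d) (upd c k R2_0)) s1' q'.
Proof.
  intros HF Hck. destruct s1 as [O lt l r1 c1].
  destruct HF as [Hsg Hnd Hr Hcp HO Hqd Hlab Hltq Hlts]; simpl in *.
  destruct (Forall2_app_inv_r _ _ Hsg) as (q1 & q2 & Hq1 & Hq2 & ->).
  inversion Hq2 as [| k' d' q2' sg2 Hk' Hnil]; subst. inversion Hnil; subst.
  assert (Hk'q : In k' (q1 ++ [k'])) by (apply in_or_app; right; left; reflexivity).
  assert (Hkq : ~ In k (q1 ++ [k'])) by (intro Hin; destruct (Hqd _ Hin); congruence).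
  destruct (NoDup_remove _ [] _ Hnd) as [Hnd1 Hk'q1]. rewrite app_nil_r in Hnd1, Hk'q1.
  destruct (Hlab k' (or_intror (Hqd _ Hk'q))) as (d' & st & E1 & E2 & E3 & E4).
  rewrite Hk' in E1; injection E1 as <-.
  exists (mkSt1 (fun o => O o /\ o <> k') (fun a b => lt a b /\ a <> k' /\ b <> k') l
            (upd r1 k d) (upd c1 k R2)), q1. split.
  { eapply s1_lin_deq; eauto; [rewrite Hcp, Hck; reflexivity |].
    split; [apply HO; auto |]. intros (o & _ & Ho). exact (preds_after_in Hlts Ho). }
  assert (Hkk' : k <> k') by (intros ->; contradiction).
  split; simpl; auto.
  - intro z; unfold upd; destruct (z =? k); auto.
  - apply upd_cp_abs with (x := R2_0), Hcp.
  - intro z; rewrite HO, in_app_iff. simpl. destruct (Nat.eq_dec z k) as [->|Hz].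
    + rewrite upd_eq. intuition congruence.
    + rewrite upd_neq by exact Hz. intuition (subst; try congruence).
      destruct (Hqd k'); auto; congruence.
  - intros z Hz. rewrite upd_neq by (intros ->; apply Hkq, in_or_app; auto). apply Hqd, in_or_app; auto.
  - intros z Hz. destruct (Nat.eq_dec z k) as [->|Hzk].
    + rewrite upd_eq in Hz. destruct Hz as [H|[H|H]]; discriminate.
    + rewrite !upd_neq in * by exact Hzk. destruct (Hlab z Hz) as (d1 & st1 & G1 & G2 & G3 & G4).
      exists d1, st1; do 3 (split; [assumption |]). intros [Y1 Y2]; apply G4, Y1.
  - intros a b (Hab & Ha & _). destruct (in_app_or _ _ _ (Hltq _ _ Hab)) as [X | [X | []]];
      [exact X | congruence].
  - assert (Hdrop : filter (fun z => negb (z =? k')) (q1 ++ [k']) = q1).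
    { rewrite filter_app; simpl. rewrite Nat.eqb_refl, app_nil_r. apply forallb_filter_id.
      apply forallb_forall. intros z Hz. destruct (Nat.eqb_spec z k'); [congruence | reflexivity]. }
    rewrite <- Hdrop. apply preds_after_filter with lt; [exact Hlts |].
    intros a b (Hab & Ha & _). split; [exact Hab |]. destruct (Nat.eqb_spec a k'); [contradiction | reflexivity].
Qed.

Lemma fwd_lin_deq_empty i r c s1 q k :
  fwd_rel (mkSt0 [] i r c) s1 q -> c k = Some R1_0 ->
  exists s1', step1 EMPTY s1 (LinDeq EMPTY k) s1' /\
    fwd_rel (mkSt0 [] i (upd r k EMPTY) (upd c k R2_0)) s1' q.
Proof.
  intros HF Hck. destruct s1 as [O lt l r1 c1]. eexists; split.
  - destruct HF as [Hsg _ _ Hcp HO _ Hlab _ _]; simpl in *. inversion Hsg; subst.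
    constructor; [rewrite Hcp, Hck; reflexivity |].
    intros o Ho. assert (Hco : c o = Some A1_0) by (apply HO in Ho; destruct Ho as [[] | H]; exact H).
    destruct (Hlab o (or_introl Hco)) as (d & st & _ & E2 & _ & E4). exists d.
    destruct st; [exact E2 |]. destruct (E4 Ho) as [E _]. rewrite E in Hco by reflexivity. discriminate.
  - eapply fwd_rel_upd_deq_cp with (x := R2_0); [exact HF | rewrite Hck | |].
    + intros [H|[H|H]]; discriminate.
    + intros [H|[H|H]]; discriminate.
    + intro z; unfold upd; destruct (z =? k); [reflexivity | apply (fwd_rv HF)].
Qed.

Lemma fwd_inv_deq sg i r c s1 q k :
  fwd_rel (mkSt0 sg i r c) s1 q -> c k = None ->
  exists s1', step1 EMPTY s1 (InvDeq k) s1' /\ fwd_rel (mkSt0 sg i r (upd c k R1_0)) s1' q.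
Proof.
  intros HF Hck. destruct s1 as [O lt l r1 c1].
  pose proof (fwd_cp HF k) as Hc1k; simpl in Hc1k; rewrite Hck in Hc1k.
  eexists; split; [constructor; exact Hc1k |].
  eapply fwd_rel_upd_deq_cp with (x := R1_0); [exact HF | rewrite Hck | | exact (fwd_rv HF)];
    intros [H|[H|H]]; discriminate.
Qed.

Lemma fwd_ret_deq sg i r c s1 q d k :
  fwd_rel (mkSt0 sg i r c) s1 q -> c k = Some R2_0 -> r k = Some d ->
  exists s1', step1 EMPTY s1 (RetDeq d k) s1' /\ fwd_rel (mkSt0 sg i r (upd c k R3_0)) s1' q.
Proof.
  intros HF Hck Hrk. destruct s1 as [O lt l r1 c1].
  pose proof (fwd_cp HF k) as Hc1k; simpl in Hc1k; rewrite Hck in Hc1k.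
  pose proof (fwd_rv HF k) as Hr1k; simpl in Hr1k; rewrite Hrk in Hr1k.
  eexists; split; [constructor; [exact Hc1k | exact Hr1k] |].
  eapply fwd_rel_upd_deq_cp with (x := R3_0); [exact HF | rewrite Hck | | exact (fwd_rv HF)];
    intros [H|[H|H]]; discriminate.
Qed.

Definition fwd_sim (s0 : st0 V) (s1 : st1 V) : Prop := exists q, fwd_rel s0 s1 q.

Lemma fwd_by_step s1 a s1' s0' q :
  step1 EMPTY s1 a s1' -> fwd_rel s0' s1' q ->
  exists tr s1'', exec (AbsQ EMPTY) s1 tr s1'' /\ visible tr = visible [a] /\ fwd_sim s0' s1''.
Proof. intros Hst HF. exists [a], s1'. split; [apply exec_one, Hst | split; [reflexivity | exists q; exact HF]]. Qed.

Lemma fwd_step s0 a s0' s1 :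
  step0 EMPTY s0 a s0' -> fwd_sim s0 s1 ->
  exists tr s1', exec (AbsQ EMPTY) s1 tr s1' /\ visible tr = visible [a] /\ fwd_sim s0' s1'.
Proof.
  intros Hst [q HF]. destruct Hst as [sg i r c d k Hck Hd | sg i r c d k Hck Hik | sg i r c k Hck
    | sg i r c k Hck | sg i r c d k Hck | i r c k Hck | sg i r c d k Hck Hrk].
  - destruct (fwd_inv_enq HF Hck Hd) as (s1' & Hst & HF'). exact (fwd_by_step Hst HF').
  - exists [], s1. split; [constructor | split; [reflexivity | exists (k :: q)]].
    exact (fwd_lin_enq HF Hck Hik).
  - destruct (fwd_ret_enq HF Hck) as (s1' & Hst & HF'). exact (fwd_by_step Hst HF').
  - destruct (fwd_inv_deq HF Hck) as (s1' & Hst & HF'). exact (fwd_by_step Hst HF').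
  - destruct (fwd_lin_deq HF Hck) as (s1' & q' & Hst & HF'). exact (fwd_by_step Hst HF').
  - destruct (fwd_lin_deq_empty HF Hck) as (s1' & Hst & HF'). exact (fwd_by_step Hst HF').
  - destruct (fwd_ret_deq HF Hck Hrk) as (s1' & Hst & HF'). exact (fwd_by_step Hst HF').
Qed.

Theorem AbsQ0_refines_AbsQ : refines (AbsQ0 EMPTY) (AbsQ EMPTY).
Proof.
  apply forward_simulation_refines with fwd_sim; [exists []; exact fwd_init |].
  intros s0 a s0' s1 Hst HF. exact (fwd_step Hst HF).
Qed.

End Forward.

(** * [AbsQ] refines [AbsQ_0] *)

Section Invariant.

Variables (V : Type) (EMPTY : V).

Record inv1 (s : st1 V) : Prop := {
  inv_O_enq : forall k, O1 s k -> cpf1 s k = Some A1 \/ cpf1 s k = Some A2;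
  inv_O_label : forall k, O1 s k ->
    exists d st, ell1 s k = Some (d, st) /\ (st = COMP <-> cpf1 s k = Some A2);
  inv_lt : forall a b, lt1 s a b -> O1 s a /\ O1 s b /\ cpf1 s a = Some A2;
  inv_completed_listing : exists q, NoDup q /\ (forall k, In k q <-> O1 s k /\ cpf1 s k = Some A2) /\
    preds_after (lt1 s) q;
  inv_labelled : forall k, cpf1 s k = Some A1 \/ cpf1 s k = Some A2 -> exists p, ell1 s k = Some p }.

Lemma inv_init : inv1 (linit (AbsQ EMPTY)).
Proof.
  split; simpl; try tauto.
  - exists []; split; [constructor | split; [simpl; tauto | exact I]].
  - intros k [H|H]; discriminate.
Qed.

Lemma inv_upd_cp_outside O lt l r r' c k x :
  inv1 (mkSt1 O lt l r c) -> ~ O k -> (x = A1 \/ x = A2 -> exists p, l k = Some p) ->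
  inv1 (mkSt1 O lt l r' (upd c k x)).
Proof.
  intros [I1 I2 I3 (q & Hnd & Hq & Hlts) I5] HOk Hx; simpl in *.
  assert (Hne : forall z, O z -> z <> k) by (intros z Hz ->; contradiction).
  split; simpl.
  - intros z Hz. rewrite upd_neq by auto. auto.
  - intros z Hz. rewrite upd_neq by auto. auto.
  - intros a b Hab. destruct (I3 _ _ Hab) as (Ha & Hb & Hca). rewrite upd_neq by auto. auto.
  - exists q. split; [exact Hnd | split; [| exact Hlts]]. intro z. rewrite Hq.
    destruct (Nat.eq_dec z k) as [->|Hz]; [tauto | rewrite upd_neq by exact Hz; reflexivity].
  - intros z Hz. destruct (Nat.eq_dec z k) as [->|Hzk].
    + rewrite upd_eq in Hz. apply Hx. destruct Hz as [H|H]; injection H; auto.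
    + rewrite upd_neq in Hz by exact Hzk. auto.
Qed.

Lemma inv_inv_enq O lt l r c d k :
  inv1 (mkSt1 O lt l r c) -> c k = None ->
  inv1 (mkSt1 (fun o => O o \/ o = k) (fun a b => lt a b \/ (compO O l a /\ b = k))
              (upd l k (d, PEND)) r (upd c k A1)).
Proof.
  intros [I1 I2 I3 (q & Hnd & Hq & Hlts) I5] Hck; simpl in *.
  assert (HOk : ~ O k) by (intro X; destruct (I1 _ X); congruence).
  split; simpl.
  - intros z [Hz | ->]; [rewrite upd_neq by congruence; auto | rewrite upd_eq; auto].
  - intros z [Hz | ->].
    + rewrite !upd_neq by congruence. auto.
    + rewrite !upd_eq. exists d, PEND; split; [reflexivity | split; discriminate].
  - intros a b [Hab | [[Ha [d' Hd']] ->]].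
    + destruct (I3 _ _ Hab) as (Ha & Hb & Hca). rewrite upd_neq by congruence. auto.
    + destruct (I2 _ Ha) as (d1 & st & G1 & G2). rewrite Hd' in G1; injection G1 as <- <-.
      rewrite upd_neq by congruence. split; [auto | split; [auto | apply G2; reflexivity]].
  - exists q. split; [exact Hnd | split].
    + intro z. rewrite Hq. destruct (Nat.eq_dec z k) as [->|Hz].
      * rewrite upd_eq. split; [intros [X _]; contradiction | intros [_ X]; discriminate].
      * rewrite upd_neq by exact Hz. intuition.
    + apply preds_after_mono with lt; [exact Hlts |].
      intros a b Hb [Hab | [_ ->]]; [exact Hab |]. apply Hq in Hb. destruct Hb; contradiction.
  - intros z Hz. destruct (Nat.eq_dec z k) as [->|Hzk]; [rewrite upd_eq; eauto |].
    rewrite !upd_neq in * by exact Hzk. auto.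
Qed.

Lemma inv_ret_enq_in O lt l r c d k :
  inv1 (mkSt1 O lt l r c) -> c k = Some A1 -> O k ->
  inv1 (mkSt1 O lt (upd l k (d, COMP)) r (upd c k A2)).
Proof.
  intros [I1 I2 I3 (q & Hnd & Hq & Hlts) I5] Hck HOk; simpl in *.
  assert (Hkq : ~ In k q) by (intro X; apply Hq in X; destruct X; congruence).
  split; simpl.
  - intros z Hz. destruct (Nat.eq_dec z k) as [->|Hzk]; [rewrite upd_eq | rewrite upd_neq]; auto.
  - intros z Hz. destruct (Nat.eq_dec z k) as [->|Hzk].
    + rewrite !upd_eq. exists d, COMP. split; [reflexivity | split; reflexivity].
    + rewrite !upd_neq by exact Hzk. auto.
  - intros a b Hab. destruct (I3 _ _ Hab) as (Ha & Hb & Hca).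
    destruct (Nat.eq_dec a k) as [->|Hak]; [rewrite upd_eq | rewrite upd_neq]; auto.
  - exists (k :: q). split; [constructor; assumption | split].
    + intro z. destruct (Nat.eq_dec z k) as [->|Hzk].
      * rewrite upd_eq. simpl; tauto.
      * rewrite upd_neq by exact Hzk. rewrite <- Hq. simpl; intuition congruence.
    + split; [| exact Hlts]. intros a Hab. apply Hq. destruct (I3 _ _ Hab) as (? & _ & ?); auto.
  - intros z Hz. destruct (Nat.eq_dec z k) as [->|Hzk]; [rewrite upd_eq; eauto |].
    rewrite !upd_neq in * by exact Hzk. auto.
Qed.

Lemma inv_lin_deq O lt l r c d k k' :
  inv1 (mkSt1 O lt l r c) -> c k = Some R1 ->
  inv1 (mkSt1 (fun o => O o /\ o <> k') (fun a b => lt a b /\ a <> k' /\ b <> k')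
              l (upd r k d) (upd c k R2)).
Proof.
  intros [I1 I2 I3 (q & Hnd & Hq & Hlts) I5] Hck; simpl in *.
  assert (HOk : ~ O k) by (intro X; destruct (I1 _ X); congruence).
  split; simpl.
  - intros z [Hz _]. rewrite upd_neq by congruence. auto.
  - intros z [Hz _]. rewrite upd_neq by congruence. auto.
  - intros a b (Hab & Ha & Hb). destruct (I3 _ _ Hab) as (Ha' & Hb' & Hca).
    rewrite upd_neq by congruence. auto.
  - exists (filter (fun z => negb (z =? k')) q). split; [apply NoDup_filter, Hnd | split].
    + intro z. rewrite filter_In, Hq. destruct (Nat.eq_dec z k) as [->|Hzk].
      * rewrite upd_eq. split; [intros [[X _] _] | intros [[X _] _]]; contradiction.
      * rewrite upd_neq by exact Hzk. destruct (Nat.eqb_spec z k'); simpl; intuition congruence.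
    + apply preds_after_filter with lt; [exact Hlts |]. intros a b (Hab & Ha & _).
      split; [exact Hab |]. destruct (Nat.eqb_spec a k'); [contradiction | reflexivity].
  - intros z Hz. destruct (Nat.eq_dec z k) as [->|Hzk].
    + rewrite upd_eq in Hz. destruct Hz; discriminate.
    + rewrite upd_neq in Hz by exact Hzk. auto.
Qed.

Lemma inv_step s a s' : inv1 s -> step1 EMPTY s a s' -> inv1 s'.
Proof.
  intros HI Hst. destruct Hst as [O lt l r c d k Hck Hd | O lt l r c k Hck | O lt l r c d k Hck Hrk
    | O lt l r c d k Hck HOk Hlk | O lt l r c k Hck HOk | O lt l r c d k k' st Hck Hd Hmin Hlk
    | O lt l r c k Hck Hpend].
  - eapply inv_inv_enq; [exact HI | exact Hck].
  - eapply inv_upd_cp_outside; [exact HI | | intros [H|H]; discriminate].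
    intro X; destruct (inv_O_enq HI X); simpl in *; congruence.
  - eapply inv_upd_cp_outside; [exact HI | | intros [H|H]; discriminate].
    intro X; destruct (inv_O_enq HI X); simpl in *; congruence.
  - eapply inv_ret_enq_in; [exact HI | exact Hck | exact HOk].
  - eapply inv_upd_cp_outside; [exact HI | exact HOk |]. intros _. apply (inv_labelled HI). auto.
  - eapply inv_lin_deq; [exact HI | exact Hck].
  - eapply inv_upd_cp_outside; [exact HI | | intros [H|H]; discriminate].
    intro X; destruct (inv_O_enq HI X); simpl in *; congruence.
Qed.

End Invariant.

Section Backward.

Variables (V : Type) (EMPTY : V).

(* A pending enqueue of [AbsQ] is, in [AbsQ_0], either not yet linearized (then it is
   still in [O] and not in the queue), or linearized and still queued, or linearized and
   already dequeued (then it has left [O]). *)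
Definition cp_match (inO inQ : Prop) (c : option cp1) (c0 : option cp0) : Prop :=
  match c with
  | None => c0 = None
  | Some R1 => c0 = Some R1_0
  | Some R2 => c0 = Some R2_0
  | Some R3 => c0 = Some R3_0
  | Some A2 => c0 = Some A2_0 /\ (inO -> inQ)
  | Some A1 => (inO /\ ~ inQ /\ c0 = Some A1_0) \/ (inQ /\ c0 = Some A_0) \/
               (~ inO /\ c0 = Some A_0)
  end.

Lemma cp_match_iff P P' I I' c c0 :
  (P <-> P') -> (I <-> I') -> cp_match P I c c0 -> cp_match P' I' c c0.
Proof. intros H1 H2. destruct c as [[]|]; simpl; tauto. Qed.

Definition label_match (c : option cp1) (i : option V) (l : option (V * status)) : Prop :=
  match c with
  | Some A1 | Some A2 => exists d st, i = Some d /\ l = Some (d, st)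
  | _ => i = None
  end.

Record bwd_rel (s1 : st1 V) (s0 : st0 V) (q : list nat) : Prop := {
  bwd_queue : queue_ids (in0 s0) q (sigma0 s0);
  bwd_nodup : NoDup q;
  bwd_rv : rv0 s0 = rv1 s1;
  bwd_queued_O : forall k, In k q -> O1 s1 k;
  bwd_cp : forall k, cp_match (O1 s1 k) (In k q) (cpf1 s1 k) (cpf0 s0 k);
  bwd_label : forall k, label_match (cpf1 s1 k) (in0 s0 k) (ell1 s1 k);
  bwd_sorted : preds_after (lt1 s1) q }.

Definition bwd_sim (s1 : st1 V) (s0 : st0 V) : Prop := exists q, bwd_rel s1 s0 q.

Lemma bwd_init s0 : bwd_sim (linit (AbsQ EMPTY)) s0 -> s0 = linit (AbsQ0 EMPTY).
Proof.
  destruct s0 as [sg i r c0]. intros [q [Hsg _ Hr HqO Hcp Hlab _]]; simpl in *.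
  destruct q as [|k q]; [| destruct (HqO k (or_introl eq_refl))].
  inversion Hsg; subst. f_equal; extensionality z; [exact (Hlab z) | exact (Hcp z)].
Qed.

Lemma queue_ids_exists (i : nat -> option V) q :
  (forall k, In k q -> exists d, i k = Some d) -> exists sg, queue_ids i q sg.
Proof.
  induction q as [|k q IH]; intros H; [exists []; constructor |].
  destruct (H k (or_introl eq_refl)) as [d Hd].
  destruct IH as [sg Hsg]; [intros; apply H; right; assumption |].
  exists (d :: sg); constructor; assumption.
Qed.

(* The completed enqueues in [O], listed along [lt], form the queue; the pending ones in
   [O] are declared not yet linearized. *)
Lemma bwd_total s : inv1 s -> exists s0, bwd_sim s s0.
Proof.
  destruct s as [O lt l r c]. intros [I1 I2 I3 (q & Hnd & Hq & Hlts) I5]; simpl in *.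
  set (i0 := fun z => match c z with Some A1 | Some A2 => option_map fst (l z) | _ => None end).
  set (c0 := fun z => match c z with
                      | None => None
                      | Some A1 => if excluded_middle_informative (O z) then Some A1_0 else Some A_0
                      | Some A2 => Some A2_0
                      | Some R1 => Some R1_0
                      | Some R2 => Some R2_0
                      | Some R3 => Some R3_0 end).
  destruct (@queue_ids_exists i0 q) as [sg Hsg].
  { intros k Hk. apply Hq in Hk. destruct Hk as [Hk Hck].
    destruct (I2 _ Hk) as (d & st & E1 & _). exists d. unfold i0; rewrite Hck, E1; reflexivity. }
  exists (mkSt0 sg i0 r c0), q. split; simpl; auto.
  - intros k Hk; apply Hq, Hk.
  - intro k. unfold c0. destruct (c k) as [[]|] eqn:E; simpl; auto.
    + destruct (excluded_middle_informative (O k)) as [HOk | HOk].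
      * left. split; [exact HOk | split; [| reflexivity]]. intro X; apply Hq in X.
        destruct X; congruence.
      * right; right; auto.
    + split; [reflexivity |]. intros; apply Hq; auto.
  - intro k. unfold label_match, i0. destruct (c k) as [[]|] eqn:E; try reflexivity.
    + destruct (I5 k (or_introl E)) as [[d st] Hp]. exists d, st. rewrite Hp; auto.
    + destruct (I5 k (or_intror E)) as [[d st] Hp]. exists d, st. rewrite Hp; auto.
Qed.

Definition bwd_pre (s1 : st1 V) (a : action V) (s0' : st0 V) : Prop :=
  exists s0 tr, bwd_sim s1 s0 /\ exec (AbsQ0 EMPTY) s0 tr s0' /\ visible tr = visible [a].

Lemma bwd_pre_step s1 s0 q a s0' : bwd_rel s1 s0 q -> step0 EMPTY s0 a s0' -> bwd_pre s1 a s0'.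
Proof.
  intros HB Hst. exists s0, [a]. split; [exists q; exact HB | split; [apply exec_one, Hst | reflexivity]].
Qed.

Lemma bwd_pre_step_cp s1 sg i r c0 q a k o y :
  bwd_rel s1 (mkSt0 sg i r (put c0 k o)) q ->
  step0 EMPTY (mkSt0 sg i r (put c0 k o)) a (mkSt0 sg i r (upd (put c0 k o) k y)) ->
  c0 k = Some y -> bwd_pre s1 a (mkSt0 sg i r c0).
Proof. intros HB Hst Hy. rewrite upd_put, (upd_id Hy) in Hst. exact (bwd_pre_step HB Hst). Qed.

Lemma bwd_rel_undo_cp O lt l l' r c x sg i c0 q k o :
  bwd_rel (mkSt1 O lt l' r (upd c k x)) (mkSt0 sg i r c0) q ->
  (forall z, z <> k -> l' z = l z) ->
  cp_match (O k) (In k q) (c k) o -> label_match (c k) (i k) (l k) ->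
  bwd_rel (mkSt1 O lt l r c) (mkSt0 sg i r (put c0 k o)) q.
Proof.
  intros [Hsg Hnd Hr HqO Hcp Hlab Hlts] Hl Hck Hlk; simpl in *.
  split; simpl; auto.
  - intro z. destruct (Nat.eq_dec z k) as [->|Hz]; [rewrite put_eq; exact Hck |].
    rewrite put_neq by exact Hz. specialize (Hcp z). rewrite upd_neq in Hcp by exact Hz. exact Hcp.
  - intro z. destruct (Nat.eq_dec z k) as [->|Hz]; [exact Hlk |].
    specialize (Hlab z). rewrite upd_neq, Hl in Hlab by exact Hz. exact Hlab.
Qed.

Lemma bwd_rel_at O lt l r c x sg i r0 c0 q k :
  bwd_rel (mkSt1 O lt l r (upd c k x)) (mkSt0 sg i r0 c0) q ->
  r0 = r /\ cp_match (O k) (In k q) (Some x) (c0 k) /\ label_match (Some x) (i k) (l k).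
Proof.
  intros [_ _ Hr _ Hcp Hlab _]; simpl in *.
  specialize (Hcp k); specialize (Hlab k); rewrite upd_eq in Hcp, Hlab. auto.
Qed.

Lemma bwd_inv_deq O lt l r c k s0' q :
  c k = None -> bwd_rel (mkSt1 O lt l r (upd c k R1)) s0' q ->
  bwd_pre (mkSt1 O lt l r c) (InvDeq k) s0'.
Proof.
  intros Hck HB. destruct s0' as [sg i r0 c0].
  destruct (bwd_rel_at HB) as (-> & Hc0k & Hik); simpl in Hc0k, Hik.
  apply bwd_pre_step_cp with q k None R1_0; [| constructor; apply put_eq | exact Hc0k].
  eapply bwd_rel_undo_cp; [exact HB | reflexivity | rewrite Hck; reflexivity | rewrite Hck; exact Hik].
Qed.

Lemma bwd_ret_deq O lt l r c d k s0' q :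
  c k = Some R2 -> r k = Some d -> bwd_rel (mkSt1 O lt l r (upd c k R3)) s0' q ->
  bwd_pre (mkSt1 O lt l r c) (RetDeq d k) s0'.
Proof.
  intros Hck Hrk HB. destruct s0' as [sg i r0 c0].
  destruct (bwd_rel_at HB) as (-> & Hc0k & Hik); simpl in Hc0k, Hik.
  apply bwd_pre_step_cp with q k (Some R2_0) R3_0; [| constructor; [apply put_eq | exact Hrk] | exact Hc0k].
  eapply bwd_rel_undo_cp; [exact HB | reflexivity | rewrite Hck; reflexivity | rewrite Hck; exact Hik].
Qed.

Lemma bwd_ret_enq_in O lt l r c d k s0' q :
  c k = Some A1 -> O k -> l k = Some (d, PEND) ->
  bwd_rel (mkSt1 O lt (upd l k (d, COMP)) r (upd c k A2)) s0' q ->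
  bwd_pre (mkSt1 O lt l r c) (RetEnq k) s0'.
Proof.
  intros Hck HOk Hlk HB. destruct s0' as [sg i r0 c0].
  destruct (bwd_rel_at HB) as (-> & Hc0k & Hik); simpl in Hc0k, Hik. destruct Hc0k as [Hc0k Hkq].
  destruct Hik as (d' & st & Hik & E). rewrite upd_eq in E; injection E as <- <-.
  apply bwd_pre_step_cp with q k (Some A_0) A2_0; [| constructor; apply put_eq | exact Hc0k].
  eapply bwd_rel_undo_cp; [exact HB | intros; apply upd_neq; assumption | |].
  - rewrite Hck. simpl. auto.
  - rewrite Hck. exists d, PEND. auto.
Qed.

Lemma bwd_ret_enq_out O lt l r c k s0' q :
  c k = Some A1 -> ~ O k -> bwd_rel (mkSt1 O lt l r (upd c k A2)) s0' q ->
  bwd_pre (mkSt1 O lt l r c) (RetEnq k) s0'.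
Proof.
  intros Hck HOk HB. destruct s0' as [sg i r0 c0].
  destruct (bwd_rel_at HB) as (-> & Hc0k & Hik); simpl in Hc0k, Hik. destruct Hc0k as [Hc0k _].
  apply bwd_pre_step_cp with q k (Some A_0) A2_0; [| constructor; apply put_eq | exact Hc0k].
  eapply bwd_rel_undo_cp; [exact HB | reflexivity | rewrite Hck; simpl; auto | rewrite Hck; exact Hik].
Qed.

Lemma exec0_lin_enqs q sgq sg i r c :
  NoDup q -> queue_ids i q sgq -> (forall z, In z q -> c z = Some A1_0) ->
  exists tr, exec (AbsQ0 EMPTY) (mkSt0 sg i r c) tr (mkSt0 (sgq ++ sg) i r (mark c q A_0)) /\
    visible tr = [].
Proof.
  revert sgq. induction q as [|z q IH]; intros sgq Hnd Hq Hc.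
  - inversion Hq; subst. exists []. rewrite mark_id by (intros ? []). split; constructor.
  - inversion Hq as [| ? d ? sgq' Hz Hq']; subst. inversion Hnd as [| ? ? Hzq Hnd']; subst.
    destruct (IH sgq' Hnd' Hq') as (tr & E & Vis); [intros; apply Hc; right; assumption |].
    exists (tr ++ [LinEnq d z]). split.
    + eapply exec_app; [exact E |]. rewrite mark_cons. apply exec_one. constructor; [| exact Hz].
      unfold mark. destruct (in_dec Nat.eq_dec z q); [contradiction | apply Hc; left; reflexivity].
    + rewrite filter_app, Vis. reflexivity.
Qed.

Lemma cp_match_queued_pending P I c0 : cp_match P I (Some A1) c0 -> I -> c0 = Some A_0.
Proof. simpl; tauto. Qed.

Lemma bwd_inv_enq_unlinearized O lt l r c d k sg i r0 c0 q :
  c k = None -> d <> EMPTY ->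
  bwd_rel (mkSt1 (fun o => O o \/ o = k) (fun a b => lt a b \/ (compO O l a /\ b = k))
                 (upd l k (d, PEND)) r (upd c k A1)) (mkSt0 sg i r0 c0) q ->
  ~ In k q -> c0 k = Some A1_0 -> i k = Some d ->
  bwd_pre (mkSt1 O lt l r c) (InvEnq d k) (mkSt0 sg i r0 c0).
Proof.
  intros Hck Hd [Hsg Hnd Hr HqO Hcp Hlab Hlts] Hkq Hc0k Hik; simpl in *.
  apply (bwd_pre_step (s0 := mkSt0 sg (put i k None) r0 (put c0 k None)) (q := q)).
  2: { assert (Hst := s0_inv_enq sg (put i k None) r0 (put c0 k None) k (put_eq c0 k None) Hd).
       rewrite !upd_put, (upd_id Hc0k), (upd_id Hik) in Hst. exact Hst. }
  split; simpl; auto.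
  - apply queue_ids_agree with i; [| exact Hsg]. intros z Hz; apply put_neq; congruence.
  - intros z Hz. destruct (HqO z Hz) as [H | ->]; [exact H | contradiction].
  - intro z. destruct (Nat.eq_dec z k) as [->|Hz]; [rewrite Hck, put_eq; reflexivity |].
    rewrite put_neq by exact Hz. specialize (Hcp z). rewrite upd_neq in Hcp by exact Hz.
    revert Hcp; apply cp_match_iff; [intuition | reflexivity].
  - intro z. destruct (Nat.eq_dec z k) as [->|Hz]; [rewrite Hck, put_eq; reflexivity |].
    specialize (Hlab z). rewrite put_neq, !upd_neq in * by exact Hz. exact Hlab.
  - apply preds_after_mono with (1 := Hlts). intros a b _ Hab; left; exact Hab.
Qed.

(* An operation queued after the freshly invoked [k] cannot have completed before [k]
   was invoked, for it would then be an [lt]-predecessor of [k]. *)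
Lemma bwd_newer_pending O lt l r c d k sg i r0 c0 q1 q2 :
  inv1 (mkSt1 O lt l r c) -> c k = None ->
  bwd_rel (mkSt1 (fun o => O o \/ o = k) (fun a b => lt a b \/ (compO O l a /\ b = k))
                 (upd l k (d, PEND)) r (upd c k A1)) (mkSt0 sg i r0 c0) (q1 ++ k :: q2) ->
  forall z, In z q1 -> z <> k /\ O z /\ c z = Some A1 /\ c0 z = Some A_0.
Proof.
  intros [I1 I2 _ _ _] Hck [_ Hnd _ HqO Hcp _ Hlts] z Hz; simpl in *.
  assert (Hzk : z <> k) by (intros ->; apply (NoDup_remove_2 _ _ _ Hnd), in_or_app; auto).
  assert (HzO : O z) by (destruct (HqO z (in_or_app _ _ _ (or_introl Hz))); congruence).
  assert (Hcz : c z = Some A1).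
  { destruct (I1 _ HzO) as [X | X]; [exact X | exfalso].
    destruct (I2 _ HzO) as (d2 & st & G1 & G2). apply G2 in X. subst st.
    apply (NoDup_app_disjoint Hnd Hz). right.
    apply (preds_after_in Hlts). right. split; [split; [exact HzO | exists d2; exact G1] | reflexivity]. }
  split; [exact Hzk | split; [exact HzO | split; [exact Hcz |]]].
  apply cp_match_queued_pending with (O z \/ z = k) (In z (q1 ++ k :: q2)).
  - specialize (Hcp z). rewrite upd_neq, Hcz in Hcp by exact Hzk. exact Hcp.
  - apply in_or_app; auto.
Qed.

Lemma bwd_inv_enq_linearized_rel O lt l r c d k sg sg2 i r0 c0 q1 q2 :
  c k = None ->
  bwd_rel (mkSt1 (fun o => O o \/ o = k) (fun a b => lt a b \/ (compO O l a /\ b = k))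
                 (upd l k (d, PEND)) r (upd c k A1)) (mkSt0 sg i r0 c0) (q1 ++ k :: q2) ->
  (forall z, In z q1 -> z <> k /\ O z /\ c z = Some A1 /\ c0 z = Some A_0) ->
  queue_ids i q2 sg2 ->
  bwd_rel (mkSt1 O lt l r c) (mkSt0 sg2 (put i k None) r0 (mark (put c0 k None) q1 A1_0)) q2.
Proof.
  intros Hck [_ Hnd Hr HqO Hcp Hlab Hlts] Hnew Hsg2; simpl in *.
  assert (Hnk : ~ In k (q1 ++ q2)) by exact (NoDup_remove_2 _ _ _ Hnd).
  assert (Hq2k : forall z, In z q2 -> z <> k) by (intros z Hz ->; apply Hnk, in_or_app; auto).
  split; simpl; auto.
  - apply queue_ids_agree with i; [| exact Hsg2]. intros z Hz; apply put_neq, Hq2k, Hz.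
  - apply NoDup_app_remove_l in Hnd. inversion Hnd; assumption.
  - intros z Hz. destruct (HqO z (in_or_app _ _ _ (or_intror (in_cons k z q2 Hz)))) as [H | ->];
      [exact H | destruct (Hq2k k Hz); reflexivity].
  - intro z. unfold mark. destruct (in_dec Nat.eq_dec z q1) as [Hz1 | Hz1].
    + destruct (Hnew z Hz1) as (_ & HzO & Hcz & _). rewrite Hcz. left.
      split; [exact HzO | split; [| reflexivity]]. intro Hz2.
      apply (NoDup_app_disjoint Hnd Hz1). right; exact Hz2.
    + destruct (Nat.eq_dec z k) as [->|Hzk]; [rewrite Hck, put_eq; reflexivity |].
      rewrite put_neq by exact Hzk. specialize (Hcp z). rewrite upd_neq in Hcp by exact Hzk.
      revert Hcp; apply cp_match_iff; [intuition |].
      rewrite in_app_iff; simpl; intuition congruence.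
  - intro z. destruct (Nat.eq_dec z k) as [->|Hz]; [rewrite Hck, put_eq; reflexivity |].
    specialize (Hlab z). rewrite put_neq, !upd_neq in * by exact Hz. exact Hlab.
  - apply preds_after_app_r in Hlts. destruct Hlts as [_ Hlts].
    apply preds_after_mono with (1 := Hlts). intros a b _ Hab; left; exact Hab.
Qed.

(* [k] was linearized before the pending enqueues [q1] queued after it: replay the
   invocation of [k], its linearization, and then those of [q1]. *)
Lemma bwd_inv_enq_linearized O lt l r c d k sg i r0 c0 q1 q2 :
  inv1 (mkSt1 O lt l r c) -> c k = None -> d <> EMPTY ->
  bwd_rel (mkSt1 (fun o => O o \/ o = k) (fun a b => lt a b \/ (compO O l a /\ b = k))
                 (upd l k (d, PEND)) r (upd c k A1)) (mkSt0 sg i r0 c0) (q1 ++ k :: q2) ->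
  c0 k = Some A_0 -> i k = Some d ->
  bwd_pre (mkSt1 O lt l r c) (InvEnq d k) (mkSt0 sg i r0 c0).
Proof.
  intros HI Hck Hd HB Hc0k Hik.
  pose proof (bwd_newer_pending HI Hck HB) as Hnew.
  pose proof (bwd_nodup HB) as Hnd.
  assert (Hkq1 : ~ In k q1) by (intro; apply (NoDup_remove_2 _ _ _ Hnd), in_or_app; auto).
  destruct (Forall2_app_inv_l _ _ (bwd_queue HB)) as (sg1 & sg2' & Hsg1 & Hsg2' & Esg); simpl in *.
  inversion Hsg2' as [| ? d' ? sg2 Hd' Hsg2]; subst. rewrite Hik in Hd'; injection Hd' as <-.
  set (c00 := mark (put c0 k None) q1 A1_0).
  assert (Hc00k : c00 k = None).
  { unfold c00, mark. destruct (in_dec Nat.eq_dec k q1); [contradiction | apply put_eq]. }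
  destruct (@exec0_lin_enqs q1 sg1 (d :: sg2) i r0 (upd (upd c00 k A1_0) k A_0)) as (tr & Etr & Vtr).
  - exact (NoDup_app_remove_r _ _ Hnd).
  - exact Hsg1.
  - intros z Hz. destruct (Hnew z Hz) as [Hzk _]. rewrite !upd_neq by exact Hzk.
    unfold c00, mark. destruct (in_dec Nat.eq_dec z q1); [reflexivity | contradiction].
  - exists (mkSt0 sg2 (put i k None) r0 c00), ([InvEnq d k; LinEnq d k] ++ tr). split; [| split].
    + exists q2. exact (bwd_inv_enq_linearized_rel Hck HB Hnew Hsg2).
    + assert (Hc : mark (upd (upd c00 k A1_0) k A_0) q1 A_0 = c0).
      { unfold c00. rewrite upd_upd, (upd_mark _ _ _ Hkq1), mark_mark, upd_put, (upd_id Hc0k).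
        apply mark_id. intros z Hz. apply Hnew, Hz. }
      assert (Hsteps : exec (AbsQ0 EMPTY) (mkSt0 sg2 (put i k None) r0 c00) [InvEnq d k; LinEnq d k]
                (mkSt0 (d :: sg2) (upd (put i k None) k d) r0 (upd (upd c00 k A1_0) k A_0))).
      { econstructor; [constructor; [exact Hc00k | exact Hd] |].
        apply exec_one. constructor; apply upd_eq. }
      rewrite upd_put, (upd_id Hik) in Hsteps. rewrite Hc in Etr. exact (exec_app Hsteps Etr).
    + simpl. rewrite Vtr. reflexivity.
Qed.

Lemma bwd_inv_enq O lt l r c d k s0' q :
  inv1 (mkSt1 O lt l r c) -> c k = None -> d <> EMPTY ->
  bwd_rel (mkSt1 (fun o => O o \/ o = k) (fun a b => lt a b \/ (compO O l a /\ b = k))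
                 (upd l k (d, PEND)) r (upd c k A1)) s0' q ->
  bwd_pre (mkSt1 O lt l r c) (InvEnq d k) s0'.
Proof.
  intros HI Hck Hd HB. destruct s0' as [sg i r0 c0].
  destruct (bwd_rel_at HB) as (-> & Hc0k & Hik); simpl in Hc0k, Hik.
  destruct Hik as (d' & st & Hik & E). rewrite upd_eq in E. injection E as <- <-.
  destruct Hc0k as [(_ & Hkq & Hc0k) | [(Hkq & Hc0k) | (HOk & _)]].
  - exact (bwd_inv_enq_unlinearized Hck Hd HB Hkq Hc0k Hik).
  - destruct (in_split _ _ Hkq) as (q1 & q2 & ->).
    exact (bwd_inv_enq_linearized HI Hck Hd HB Hc0k Hik).
  - destruct HOk. right; reflexivity.
Qed.

(* Before the dequeue, its victim [k'] sat at the old end of the queue. *)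
Lemma bwd_lin_deq_rel O lt l r c d k k' st sg i c0 q :
  inv1 (mkSt1 O lt l r c) -> c k = Some R1 -> minO O lt k' -> l k' = Some (d, st) ->
  bwd_rel (mkSt1 (fun o => O o /\ o <> k') (fun a b => lt a b /\ a <> k' /\ b <> k')
                 l (upd r k d) (upd c k R2)) (mkSt0 sg i (upd r k d) c0) q ->
  bwd_rel (mkSt1 O lt l r c) (mkSt0 (sg ++ [d]) i r (put c0 k (Some R1_0))) (q ++ [k']).
Proof.
  intros [I1 _ I3 _ _] Hck [HOk' Hmin] Hlk' [Hsg Hnd _ HqO Hcp Hlab Hlts]; simpl in *.
  assert (Hkk' : k <> k') by (intros ->; destruct (I1 _ HOk'); congruence).
  assert (Hk'q : ~ In k' q) by (intro X; destruct (HqO _ X); auto).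
  assert (Hc'k' := Hcp k'); assert (Hl'k' := Hlab k'). rewrite upd_neq in Hc'k', Hl'k' by congruence.
  split; simpl.
  - apply Forall2_app; [exact Hsg | constructor; [| constructor]].
    destruct (I1 _ HOk') as [X | X]; rewrite X in Hl'k'; destruct Hl'k' as (d1 & st1 & G1 & G2);
      rewrite Hlk' in G2; injection G2 as -> ->; exact G1.
  - apply NoDup_app; [exact Hnd | repeat constructor; intros [] |].
    intros a Ha [-> | []]. contradiction.
  - reflexivity.
  - intros z Hz. apply in_app_or in Hz. destruct Hz as [Hz | [-> | []]]; [apply HqO | ]; auto.
  - intro z. destruct (Nat.eq_dec z k) as [->|Hzk]; [rewrite put_eq, Hck; reflexivity |].
    rewrite put_neq by exact Hzk. destruct (Nat.eq_dec z k') as [->|Hzk'].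
    + destruct (I1 _ HOk') as [X | X]; rewrite X in Hc'k' |- *; simpl in *.
      * right; left. split; [apply in_or_app; right; left; reflexivity | tauto].
      * split; [tauto | intros _; apply in_or_app; right; left; reflexivity].
    + specialize (Hcp z). rewrite upd_neq in Hcp by exact Hzk. revert Hcp.
      apply cp_match_iff; [tauto |]. rewrite in_app_iff; simpl; intuition congruence.
  - intro z. destruct (Nat.eq_dec z k) as [->|Hzk].
    + specialize (Hlab k). rewrite upd_eq in Hlab. rewrite Hck. exact Hlab.
    + specialize (Hlab z). rewrite upd_neq in Hlab by exact Hzk. exact Hlab.
  - apply preds_after_snoc with (1 := Hlts).
    + intros a b Hb Hab. destruct (Nat.eq_dec a k') as [-> | Hak']; [left; reflexivity | right].
      split; [exact Hab | split; [exact Hak' | intros ->; contradiction]].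
    + intros a Hak'. apply Hmin. exists a. split; [apply (I3 _ _ Hak') | exact Hak'].
Qed.

Lemma bwd_lin_deq O lt l r c d k k' st s0' q :
  inv1 (mkSt1 O lt l r c) -> c k = Some R1 -> minO O lt k' -> l k' = Some (d, st) ->
  bwd_rel (mkSt1 (fun o => O o /\ o <> k') (fun a b => lt a b /\ a <> k' /\ b <> k')
                 l (upd r k d) (upd c k R2)) s0' q ->
  bwd_pre (mkSt1 O lt l r c) (LinDeq d k) s0'.
Proof.
  intros HI Hck Hmin Hlk' HB. destruct s0' as [sg i r0 c0].
  destruct (bwd_rel_at HB) as (-> & Hc0k & _); simpl in Hc0k.
  assert (Hst : step0 EMPTY (mkSt0 (sg ++ [d]) i r (put c0 k (Some R1_0))) (LinDeq d k)
                      (mkSt0 sg i (upd r k d) (upd (put c0 k (Some R1_0)) k R2_0)))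
    by (constructor; apply put_eq).
  rewrite upd_put, (upd_id Hc0k) in Hst.
  exact (bwd_pre_step (bwd_lin_deq_rel HI Hck Hmin Hlk' HB) Hst).
Qed.

(* A dequeue may return [EMPTY] only while every operation of [O] is pending, so the
   queue of [AbsQ_0] consists of enqueues linearized after that dequeue. *)
Lemma bwd_lin_deq_empty_pending O lt l r r' c k sg i c0 q :
  inv1 (mkSt1 O lt l r c) -> c k = Some R1 ->
  (forall o, O o -> exists d, l o = Some (d, PEND)) ->
  bwd_rel (mkSt1 O lt l r' (upd c k R2)) (mkSt0 sg i r' c0) q ->
  forall z, In z q -> z <> k /\ O z /\ c z = Some A1 /\ c0 z = Some A_0.
Proof.
  intros [I1 I2 _ _ _] Hck Hpend [_ _ _ HqO Hcp _ _] z Hz; simpl in *.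
  assert (HzO := HqO z Hz).
  assert (Hzk : z <> k) by (intros ->; destruct (I1 _ HzO); congruence).
  assert (Hcz : c z = Some A1).
  { destruct (I1 _ HzO) as [X | X]; [exact X |].
    destruct (I2 _ HzO) as (d & st & G1 & G2). apply G2 in X; subst st.
    destruct (Hpend _ HzO) as [d' G3]. congruence. }
  split; [exact Hzk | split; [exact HzO | split; [exact Hcz |]]].
  apply cp_match_queued_pending with (O z) (In z q); [| exact Hz].
  specialize (Hcp z). rewrite upd_neq, Hcz in Hcp by exact Hzk. exact Hcp.
Qed.

Lemma bwd_lin_deq_empty_rel O lt l r r' c k sg i c0 q :
  c k = Some R1 -> bwd_rel (mkSt1 O lt l r' (upd c k R2)) (mkSt0 sg i r' c0) q ->
  (forall z, In z q -> z <> k /\ O z /\ c z = Some A1 /\ c0 z = Some A_0) ->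
  bwd_rel (mkSt1 O lt l r c) (mkSt0 [] i r (mark (put c0 k (Some R1_0)) q A1_0)) [].
Proof.
  intros Hck [_ _ _ _ Hcp Hlab _] Hq; simpl in *.
  split; simpl; try constructor; try tauto.
  - intro z. unfold mark. destruct (in_dec Nat.eq_dec z q) as [Hz | Hz].
    + destruct (Hq z Hz) as (_ & HzO & Hcz & _). rewrite Hcz. left; tauto.
    + destruct (Nat.eq_dec z k) as [->|Hzk]; [rewrite put_eq, Hck; reflexivity |].
      rewrite put_neq by exact Hzk. specialize (Hcp z). rewrite upd_neq in Hcp by exact Hzk.
      revert Hcp; apply cp_match_iff; tauto.
  - intro z. destruct (Nat.eq_dec z k) as [->|Hzk].
    + specialize (Hlab k). rewrite upd_eq in Hlab. rewrite Hck. exact Hlab.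
    + specialize (Hlab z). rewrite upd_neq in Hlab by exact Hzk. exact Hlab.
Qed.

Lemma bwd_lin_deq_empty O lt l r c k s0' q :
  inv1 (mkSt1 O lt l r c) -> c k = Some R1 ->
  (forall o, O o -> exists d, l o = Some (d, PEND)) ->
  bwd_rel (mkSt1 O lt l (upd r k EMPTY) (upd c k R2)) s0' q ->
  bwd_pre (mkSt1 O lt l r c) (LinDeq EMPTY k) s0'.
Proof.
  intros HI Hck Hpend HB. destruct s0' as [sg i r0 c0].
  destruct (bwd_rel_at HB) as (-> & Hc0k & _); simpl in Hc0k.
  pose proof (bwd_lin_deq_empty_pending HI Hck Hpend HB) as Hq.
  assert (Hkq : ~ In k q) by (intro X; destruct (Hq k X); auto).
  set (c00 := mark (put c0 k (Some R1_0)) q A1_0).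
  assert (Hc00k : c00 k = Some R1_0).
  { unfold c00, mark. destruct (in_dec Nat.eq_dec k q); [contradiction | apply put_eq]. }
  destruct (@exec0_lin_enqs q sg [] i (upd r k EMPTY) (upd c00 k R2_0)) as (tr & Etr & Vtr).
  - exact (bwd_nodup HB).
  - exact (bwd_queue HB).
  - intros z Hz. destruct (Hq z Hz) as [Hzk _]. rewrite upd_neq by exact Hzk.
    unfold c00, mark. destruct (in_dec Nat.eq_dec z q); [reflexivity | contradiction].
  - exists (mkSt0 [] i r c00), (LinDeq EMPTY k :: tr). split; [| split].
    + exists []. eapply bwd_lin_deq_empty_rel; [exact Hck | exact HB | exact Hq].
    + assert (Hc : mark (upd c00 k R2_0) q A_0 = c0).
      { unfold c00. rewrite (upd_mark _ _ _ Hkq), mark_mark, upd_put, (upd_id Hc0k).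
        apply mark_id. intros z Hz. apply Hq, Hz. }
      rewrite Hc, app_nil_r in Etr. econstructor; [constructor; exact Hc00k | exact Etr].
    + simpl. rewrite Vtr. reflexivity.
Qed.

Lemma bwd_step s1 a s1' s0' :
  inv1 s1 -> step1 EMPTY s1 a s1' -> bwd_sim s1' s0' -> bwd_pre s1 a s0'.
Proof.
  intros HI Hst [q HB]. destruct Hst as [O lt l r c d k Hck Hd | O lt l r c k Hck
    | O lt l r c d k Hck Hrk | O lt l r c d k Hck HOk Hlk | O lt l r c k Hck HOk
    | O lt l r c d k k' st Hck Hd Hmin Hlk | O lt l r c k Hck Hpend].
  - exact (bwd_inv_enq HI Hck Hd HB).
  - exact (bwd_inv_deq Hck HB).
  - exact (bwd_ret_deq Hck Hrk HB).
  - exact (bwd_ret_enq_in Hck HOk Hlk HB).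
  - exact (bwd_ret_enq_out Hck HOk HB).
  - exact (bwd_lin_deq HI Hck Hmin Hlk HB).
  - exact (bwd_lin_deq_empty HI Hck Hpend HB).
Qed.

Theorem AbsQ_refines_AbsQ0 : refines (AbsQ EMPTY) (AbsQ0 EMPTY).
Proof.
  apply backward_simulation_refines with (@inv1 V) bwd_sim.
  - exact (inv_init EMPTY).
  - intros s a s' HI Hst. exact (inv_step HI Hst).
  - exact bwd_total.
  - exact bwd_init.
  - intros s1 a s1' s0' HI Hst HB. exact (bwd_step HI Hst HB).
Qed.

End Backward.

Theorem theorem3 (V : Type) (EMPTY : V) :
  refines (AbsQ EMPTY) (AbsQ0 EMPTY) /\ refines (AbsQ0 EMPTY) (AbsQ EMPTY).
Proof. split; [apply AbsQ_refines_AbsQ0 | apply AbsQ0_refines_AbsQ]. Qed.
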